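(* For $x$ sufficiently large, let $r=\pi\!\left(2\frac{\log x}{\log\log x}\right)$ and let $$\mathcal{A}(x)=\left\{(a_1,\dots,a_r)\in\mathbb{Z}_{\ge 0}^r:\ \sum_{j=1}^r a_j\log p_j\le\log x,\ \ a_i\ge \left\lfloor \frac{p_j}{p_i}\right\rfloor a_j \text{ for all } 1\le i<j\le r\right\}.$$ Then $\mathcal{J}(x)\le \#\mathcal{A}(x)$.
   Context: $p_1=2<p_2=3<\cdots$ is the sequence of primes and $\pi(y)$ the number of primes $\le y$. A positive integer $n$ is a Jordan-Pólya number if it can be written as a product of factorials, i.e. $n=a_1!\cdots a_s!$ for some $s\ge1$ and positive integers $a_i$; $\mathcal{J}(x)$ is the number of Jordan-Pólya numbers $\le x$. $\log$ is the natural logarithm. *)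

From HB Require Import structures.
From mathcomp Require Import all_boot all_order all_algebra.
From mathcomp Require Import boolp Rstruct.
From Stdlib Require Import Reals.

Set Implicit Arguments.
Unset Strict Implicit.
Unset Printing Implicit Defensive.

Import Order.TTheory GRing.Theory Num.Theory.

(* floor of a real, truncated at 0 (only used for counting naturals <= y) *)
Definition floorR (y : R) : nat := Z.to_nat (Int_part y).

Definition primes_upto (N : nat) : seq nat := [seq p <- iota 0 N.+1 | prime p].

Definition prime_pi (y : R) : nat := size (primes_upto (floorR y)).

(* nth_prime j = p_{j+1}  (0-indexed: nth_prime 0 = 2).  Correct because
   p_{j+1} <= 2^(2^j) (Euclid's bound). *)
Definition nth_prime (j : nat) : nat := nth 0 (primes_upto (expn 2 (expn 2 j))) j.

Definition is_JP (n : nat) : Prop :=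
  exists s : seq nat, [/\ 0 < size s, all (fun a => 0 < a) s & n = \prod_(a <- s) a`!].

Definition JP_count (x : R) : nat :=
  #|[set n : 'I_(floorR x).+1 | (0 < val n) && `[< is_JP (val n) >] ]|.

Definition rJ (x : R) : nat := prime_pi (Rdiv (Rmult 2 (ln x)) (ln (ln x))).

(* Tuples are indexed by 'I_r (index j <-> p_{j+1}).  Entries are
   taken in 'I_(floor x + 1); this bound is implied by the log constraint
   (a_j log 2 <= log x) for x >= 1, so it does not change the set. *)
Definition A_count (x : R) : nat :=
  #|[set a : {ffun 'I_(rJ x) -> 'I_(floorR x).+1} |
      `[< Rle (\big[Rplus/R0]_(j < rJ x) Rmult (INR (val (a j))) (ln (INR (nth_prime j))))
              (ln x)
           /\ forall i j : 'I_(rJ x), (i < j)%N ->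
                (nth_prime j %/ nth_prime i * val (a j) <= val (a i))%N >] ]|.

From HB Require Import structures.
From mathcomp Require Import all_boot all_order all_algebra.
From mathcomp Require Import boolp Rstruct.
From Stdlib Require Import Reals Lra Lia.
From mathcomp Require Import zify.
(* Stdlib's Reals rebinds [_ ^ _] on nat to Nat.pow; restore MathComp's expn. *)
Import ssrnat.

(* Every Jordan-Polya number n <= x is sent to its vector of
   exponents (v_{p_j}(n))_{j < r}, where p_1 < ... < p_r are the primes up to
   y = 2 log x / log log x; we show this map is injective into A(x).
   1. Real analysis: a^a <= e^a a!, hence ln a! >= a ln a - a; for
      x >= exp (exp 16) this forces every a with a! <= x to satisfy a <= y.
      Since a prime dividing a_1! ... a_s! divides some a_i! and so is at most
      a_i, every Jordan-Polya number n <= x is y-smooth.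
   2. Prime bookkeeping: Euclid's bound p_{j+1} <= 2^(2^j) identifies
      [nth_prime j] with the j-th entry of [primes_upto B] whenever it exists;
      a B-smooth n is then the product of the p_j ^ v_{p_j}(n), so the
      exponent vector determines n and sum_j v_{p_j}(n) ln p_j = ln n <= ln x.
   3. Legendre's formula v_p(a!) = sum_k floor(a/p^k) gives, term by term,
      floor(q/p) v_q(a!) <= v_p(a!) for primes p, q; this is additive over
      products of factorials, which yields the second constraint of A(x). *)

Section RealBounds.
Local Open Scope R_scope.

Lemma ln_le {x y : R} : 0 < x -> x <= y -> ln x <= ln y.
Proof.
move=> hx hxy; case: (Rle_lt_or_eq_dec _ _ hxy) => [h|<-]; last exact: Rle_refl.
exact/Rlt_le/ln_increasing.
Qed.

Lemma exp_pow t n : exp t ^ n = exp (INR n * t).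
Proof.
elim: n => [|n IH]; first by rewrite /= Rmult_0_l exp_0.
by rewrite [LHS]/= IH -exp_plus S_INR; f_equal; ring.
Qed.

Lemma INR_fact_gt0 a : 0 < INR a`!.
Proof. exact/lt_0_INR/ltP/fact_gt0. Qed.

(* (1 + 1/n)^n <= e, written without division. *)
Lemma succ_pow_le n : (INR n + 1) ^ n <= exp 1 * INR n ^ n.
Proof.
case: n => [|n]; first by rewrite /= Rmult_1_r; have := exp_ineq1_le 1; lra.
set A := INR n.+1.
have hA : 0 < A by apply: lt_0_INR; lia.
have -> : A + 1 = A * (1 + / A) by field; lra.
rewrite Rpow_mult_distr Rmult_comm.
apply: Rmult_le_compat_r; first by apply: pow_le; lra.
apply: Rle_trans (_ : exp (/ A) ^ n.+1 <= _).
  apply: pow_incr; split; last exact: exp_ineq1_le.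
  by have := Rinv_0_lt_compat _ hA; lra.
by rewrite exp_pow -/A; right; f_equal; field; lra.
Qed.

Lemma pow_le_exp_fact a : INR a ^ a <= exp (INR a) * INR a`!.
Proof.
elim: a => [|a IH]; first by rewrite /= exp_0; lra.
rewrite factS S_INR mult_INR S_INR /= exp_plus.
have h0 : 0 <= INR a by apply: pos_INR.
have h1 : 0 < exp 1 by apply: exp_pos.
have h2 : 0 <= INR a ^ a by apply: pow_le.
have h3 := INR_fact_gt0 a; have h4 := exp_pos (INR a).
apply: Rle_trans (_ : (INR a + 1) * (exp 1 * INR a ^ a) <= _).
  by apply: Rmult_le_compat_l; [lra | exact: succ_pow_le].
have : exp 1 * INR a ^ a <= exp 1 * (exp (INR a) * INR a`!).
  by apply: Rmult_le_compat_l; lra.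
nra.
Qed.

Lemma ln_fact_ge {a : nat} : (0 < a)%N -> INR a * ln (INR a) - INR a <= ln (INR a`!).
Proof.
move=> ha; have hA : 0 < INR a by exact/lt_0_INR/ltP.
rewrite -ln_pow //.
have := ln_le (pow_lt _ a hA) (pow_le_exp_fact a).
rewrite ln_mult ?ln_exp; [lra | exact: exp_pos | exact: INR_fact_gt0].
Qed.

(* For L = ln x large, y = 2 L / ln L satisfies y (ln y - 1) >= L, i.e.
   y! already exceeds x (up to Stirling). *)
Lemma log_bound_large {L : R} : exp 16 <= L ->
  L <= 2 * L / ln L * (ln (2 * L / ln L) - 1).
Proof.
move=> hL; have hL0 : 0 < L by have := exp_pos 16; lra.
set u := ln L; set y := 2 * L / u.
have hu : 16 <= u by rewrite /u -[16]ln_exp; apply: ln_le => //; apply: exp_pos.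
have lny : ln y = ln 2 + u - ln u.
  rewrite /y /Rdiv ln_mult; [|lra|by apply: Rinv_0_lt_compat; lra].
  by rewrite ln_mult ?ln_Rinv; [rewrite /u; ring | lra | lra | lra].
have hln2 := ln_lt_2.
set s := sqrt u.
have hss : s * s = u by apply: sqrt_sqrt; lra.
have hs0 : 0 <= s := sqrt_pos u.
have hs4 : 4 <= s by nra.
have hlns : ln s <= s - 1.
  by rewrite -[s - 1]ln_exp; apply: ln_le; [lra | have := exp_ineq1_le (s - 1); lra].
have hlnu : ln u = 2 * ln s by rewrite -hss ln_mult; [ring | lra | lra].
have -> : y * (ln y - 1) = L * (2 * (ln 2 + u - ln u - 1)) / u.
  by rewrite lny /y; field; lra.
have hK : u <= 2 * (ln 2 + u - ln u - 1) by nra.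
apply: (Rmult_le_reg_r u); first lra.
have -> : L * (2 * (ln 2 + u - ln u - 1)) / u * u
          = L * (2 * (ln 2 + u - ln u - 1)) by field; lra.
nra.
Qed.

Lemma fact_le_bound {x : R} {a : nat} : exp (exp 16) <= x -> INR a`! <= x ->
  INR a <= 2 * ln x / ln (ln x).
Proof.
move=> hx hf; have hx0 : 0 < x by have := exp_pos (exp 16); lra.
set L := ln x.
have hL : exp 16 <= L by rewrite /L -[exp 16]ln_exp; apply: ln_le => //; apply: exp_pos.
have hL0 : 0 < L by have := exp_pos 16; lra.
have hu : 0 < ln L.
  by rewrite -ln_1; apply: ln_increasing; [lra | have := exp_ineq1_le 16; lra].
set y := 2 * L / ln L.
have hy : 0 < y by apply: Rdiv_lt_0_compat; lra.
have hyL : L <= y * (ln y - 1) := log_bound_large hL.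
case: (Rle_or_lt (INR a) y) => // hay; exfalso.
have hc : 0 < ln y - 1 by nra.
have ha : (0 < a)%N by apply/ltP/INR_lt; rewrite /=; lra.
have hlnA : ln y < ln (INR a) by apply: ln_increasing.
have h1 := ln_fact_ge ha.
have h2 : ln (INR a`!) <= L by apply: ln_le => //; apply: INR_fact_gt0.
nra.
Qed.

Lemma floorR_ge (p : nat) y : INR p <= y -> (p <= floorR y)%N.
Proof.
move=> h; have [h1 h2] := base_Int_part y.
rewrite /floorR; set z := Int_part y in h1 h2 *.
have /lt_IZR hz : IZR (Z.of_nat p) < IZR (z + 1) by rewrite plus_IZR -INR_IZR_INZ; lra.
by apply/leP; lia.
Qed.

Lemma floorR_le (p : nat) y : 0 <= y -> (p <= floorR y)%N -> INR p <= y.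
Proof.
move=> hy /leP h; have [h1 h2] := base_Int_part y.
move: h; rewrite /floorR; set z := Int_part y in h1 h2 * => h.
have hz : (Z.of_nat p <= Z.max 0 z)%Z by lia.
rewrite INR_IZR_INZ; apply: Rle_trans (IZR_le _ _ hz) _.
by case: (Z.max_spec 0 z) => [[_ ->]|[_ ->]].
Qed.

Lemma INR_expn a b : INR (a ^ b) = INR a ^ b.
Proof. by elim: b => [|b IH]; rewrite ?expn0 // expnS mult_INR IH. Qed.

Lemma ln_prod r (F : 'I_r -> nat) : (forall j, 0 < F j)%N ->
  ln (INR (\prod_(j < r) F j)) = \big[Rplus/R0]_(j < r) ln (INR (F j)).
Proof.
move=> hF.
apply: (proj2 (big_ind2 (fun m v => (0 < m)%N /\ ln (INR m) = v) _ _ _)).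
- by split => //; rewrite /= ln_1.
- move=> m1 v1 m2 v2 [p1 <-] [p2 <-]; split; first by rewrite muln_gt0 p1 p2.
  by rewrite mult_INR ln_mult //; apply/lt_0_INR/ltP.
- by move=> j _; split.
Qed.

End RealBounds.

Lemma mem_primes_upto N p : (p \in primes_upto N) = prime p && (p <= N).
Proof. by rewrite /primes_upto mem_filter mem_iota add0n ltnS. Qed.

Lemma uniq_primes_upto N : uniq (primes_upto N).
Proof. by rewrite /primes_upto filter_uniq // iota_uniq. Qed.

Lemma primes_upto_cat {N M : nat} : N <= M ->
  primes_upto M = primes_upto N ++ [seq p <- iota N.+1 (M - N) | prime p].
Proof.
move=> h; have e : M.+1 = N.+1 + (M - N) by rewrite addSn subnKC.
by rewrite /primes_upto {1}e iotaD filter_cat.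
Qed.

Lemma euclid_primes j : exists s : seq nat,
  [/\ size s = j.+1, uniq s, all prime s, all (fun p => p <= 2 ^ (2 ^ j)) s
    & \prod_(p <- s) p <= 2 ^ (2 ^ j.+1).-1].
Proof.
elim: j => [|j [s [hs hu hp hb hQ]]]; first by exists [:: 2]; rewrite big_seq1.
set Q := \prod_(p <- s) p.
have hQ0 : 0 < Q by rewrite /Q big_seq; apply: prodn_cond_gt0 => p /(allP hp)/prime_gt0.
set p := pdiv Q.+1.
have pp : prime p by apply: pdiv_prime; rewrite ltnS.
have pns : p \notin s.
  apply/negP => ps; have d1 : p %| Q by rewrite /Q (big_rem _ ps) /= dvdn_mulr.
  by move: (pdiv_dvd Q.+1); rewrite -/p -addn1 dvdn_addr // Euclid_dvd1.
have hpl : p <= 2 ^ (2 ^ j.+1).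
  apply: leq_trans (pdiv_leq (ltn0Sn Q)) _.
  have e1 : 0 < 2 ^ j.+1 by rewrite expn_gt0.
  move: e1 hQ; case: (2 ^ j.+1) => // e _ hQ.
  by rewrite expnS mul2n -addnn -addn1 leq_add // expn_gt0.
exists (p :: s); split => /=; rewrite ?hs ?pns ?pp ?hpl //.
- apply/allP => q /(allP hb) hq; apply: leq_trans hq _.
  by apply: leq_pexp2l => //; rewrite leq_exp2l.
- rewrite big_cons; apply: leq_trans (leq_mul hpl hQ) _.
  rewrite -expnD; apply: leq_pexp2l => //.
  rewrite [2 ^ j.+2]expnS; have : 0 < 2 ^ j.+1 by rewrite expn_gt0.
  set e := 2 ^ j.+1; lia.
Qed.

Lemma size_primes_upto_dexp j : j < size (primes_upto (2 ^ (2 ^ j))).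
Proof.
have [s [hs hu hp hb _]] := euclid_primes j.
rewrite -hs; apply: uniq_leq_size => // q qs.
by rewrite mem_primes_upto (allP hp _ qs) (allP hb _ qs).
Qed.

Lemma nth_prime_upto B j : j < size (primes_upto B) ->
  nth_prime j = nth 0 (primes_upto B) j.
Proof.
move=> hj; rewrite /nth_prime; case: (leqP B (2 ^ (2 ^ j))) => h.
  by rewrite (primes_upto_cat h) nth_cat hj.
by rewrite (primes_upto_cat (ltnW h)) nth_cat size_primes_upto_dexp.
Qed.

Lemma prime_nth_prime j : prime (nth_prime j).
Proof.
have := mem_nth 0 (size_primes_upto_dexp j).
by rewrite mem_primes_upto => /andP [].
Qed.

Definition smooth (B n : nat) : Prop := forall p, p \in primes n -> p <= B.

Lemma prod_logn_over {n : nat} (ps : seq nat) : 0 < n -> {subset primes n <= ps} ->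
  uniq ps -> n = \prod_(p <- ps) p ^ logn p n.
Proof.
move=> n0 hsub hu.
rewrite (bigID (mem (primes n))) /= [X in _ * X]big1 ?muln1; last first.
  move=> p hp; rewrite (_ : logn p n = 0) //.
  by apply/eqP; rewrite -leqn0 leqNgt logn_gt0.
rewrite -big_filter -(perm_big _ (uniq_perm (primes_uniq n) (filter_uniq _ hu) _)).
  by rewrite {1}(prod_prime_decomp n0) prime_decompE big_map.
by move=> p; rewrite mem_filter; case: (boolP (p \in primes n)) => //= /hsub ->.
Qed.

Lemma smooth_factor {B n : nat} : 0 < n -> smooth B n ->
  n = \prod_(j < size (primes_upto B)) nth_prime j ^ logn (nth_prime j) n.
Proof.
move=> n0 hn; rewrite {1}(prod_logn_over _ n0 _ (uniq_primes_upto B)).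
  rewrite (big_nth 0) big_mkord; apply: eq_bigr => j _.
  by rewrite -nth_prime_upto.
move=> p hp; rewrite mem_primes_upto hn // andbT.
by move: hp; rewrite mem_primes => /andP [].
Qed.

Lemma ln_smooth {B n : nat} : 0 < n -> smooth B n ->
  ln (INR n) = \big[Rplus/R0]_(j < size (primes_upto B))
                 Rmult (INR (logn (nth_prime j) n)) (ln (INR (nth_prime j))).
Proof.
move=> n0 hn; rewrite {1}(smooth_factor n0 hn) ln_prod; last first.
  by move=> j; rewrite expn_gt0 prime_gt0 // prime_nth_prime.
apply: eq_bigr => j _; rewrite INR_expn ln_pow //.
exact/lt_0_INR/ltP/prime_gt0/prime_nth_prime.
Qed.

(* Legendre comparison: floor(q/p) v_q(a!) <= v_p(a!) for primes p, q,
   comparing floor(a/q^k) and floor(a/p^k) term by term. *)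
Lemma logn_fact_ratio p q a : prime p -> prime q ->
  q %/ p * logn q a`! <= logn p a`!.
Proof.
move=> pp pq; rewrite !logn_fact // big_distrr /=.
rewrite big_nat_cond [X in _ <= X]big_nat_cond.
apply: leq_sum => k /andP [/andP [hk _] _].
set t := q %/ p.
have htp : t * p ^ k <= q ^ k.
  case: (posnP t) => [->|t0]; first by rewrite mul0n.
  apply: leq_trans (_ : t ^ k * p ^ k <= _).
    by rewrite leq_mul2r -{1}(expn1 t) leq_pexp2l ?orbT.
  by rewrite -expnMn leq_exp2r // leq_divM.
rewrite leq_divRL ?expn_gt0 ?prime_gt0 // mulnAC -mulnA.
apply: leq_trans (leq_divM a (q ^ k)).
by rewrite mulnA [X in _ <= X]mulnC leq_mul2r htp orbT.
Qed.

Lemma logn_prod_fact p s : logn p (\prod_(a <- s) a`!) = \sum_(a <- s) logn p a`!.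
Proof.
elim: s => [|a s IH]; first by rewrite !big_nil logn1.
by rewrite !big_cons lognM ?fact_gt0 ?IH // prodn_gt0 // => i; apply: fact_gt0.
Qed.

Lemma logn_JP_ratio p q n : prime p -> prime q -> is_JP n ->
  q %/ p * logn q n <= logn p n.
Proof.
move=> pp pq [s [_ _ ->]]; rewrite !logn_prod_fact big_distrr /=.
by apply: leq_sum => a _; apply: logn_fact_ratio.
Qed.

Lemma prime_dvd_fact p a : prime p -> p %| a`! -> p <= a.
Proof.
move=> pp; elim: a => [|a IH]; first by rewrite fact0 Euclid_dvd1.
rewrite factS Euclid_dvdM // => /orP [/dvdn_leq -> //|/IH h].
exact: leq_trans h _.
Qed.

Lemma JP_smooth x n : Rle (exp (exp 16)) x -> 0 < n -> is_JP n -> Rle (INR n) x ->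
  smooth (floorR (Rdiv (Rmult 2 (ln x)) (ln (ln x)))) n.
Proof.
move=> hx n0 [s [_ _ hns]] hnx p; rewrite mem_primes => /and3P [pp _].
rewrite hns Euclid_dvd_prod // big_has => /hasP [a ais pa].
have hale : a`! <= n by rewrite dvdn_leq // hns (big_rem _ ais) /= dvdn_mulr.
have hax : Rle (INR a`!) x by apply: Rle_trans hnx; exact/le_INR/leP.
apply: floorR_ge; apply: Rle_trans (fact_le_bound hx hax).
exact/le_INR/leP/prime_dvd_fact.
Qed.

Definition exponent_vector (r N n : nat) : {ffun 'I_r -> 'I_N.+1} :=
  [ffun j : 'I_r => inord (logn (nth_prime j) n)].

Lemma exponent_vectorE {r N n : nat} (j : 'I_r) : n <= N ->
  val (exponent_vector r N n j) = logn (nth_prime j) n.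
Proof.
move=> hn; rewrite ffunE /= inordK // ltnS; apply: leq_trans hn.
by case: (posnP n) => [->|n0]; rewrite ?logn0 // ltnW // ltn_logl.
Qed.

Lemma exponent_vector_inj {B N n m : nat} : 0 < n -> 0 < m -> n <= N -> m <= N ->
  smooth B n -> smooth B m ->
  exponent_vector (size (primes_upto B)) N n
    = exponent_vector (size (primes_upto B)) N m -> n = m.
Proof.
move=> n0 m0 nN mN hn hm e.
rewrite (smooth_factor n0 hn) (smooth_factor m0 hm); apply: eq_bigr => j _.
by rewrite -(exponent_vectorE j nN) -(exponent_vectorE j mN) e.
Qed.

Theorem mainTheorem6 :
  exists x0 : R, forall x : R, Rle x0 x -> (JP_count x <= A_count x)%N.
Proof.
exists (exp (exp 16)) => x hx.
have hx0 : Rle 0 x by have := exp_pos (exp 16); lra.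
rewrite /JP_count /A_count.
set S := [set n : 'I_(floorR x).+1 | _].
set B := floorR (Rdiv (Rmult 2 (ln x)) (ln (ln x))).
pose F (n : 'I_(floorR x).+1) := exponent_vector (rJ x) (floorR x) n.
have JP_S n : n \in S -> [/\ 0 < val n, is_JP n, val n <= floorR x & smooth B n].
  rewrite inE => /andP [n0 /asboolP hJP].
  have nN : val n <= floorR x by rewrite -ltnS ltn_ord.
  by split => //; apply: JP_smooth => //; apply: floorR_le.
have F_inj : {in S &, injective F}.
  move=> n m /JP_S [n0 _ nN hn] /JP_S [m0 _ mN hm] e.
  exact/val_inj/(exponent_vector_inj n0 m0 nN mN hn hm e).
rewrite -(card_in_imset F_inj); apply/subset_leq_card/subsetP => a /imsetP [n nS ->].
have [n0 hJP nN hn] := JP_S n nS; rewrite inE; apply/asboolP; split.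
- under eq_bigr do rewrite exponent_vectorE //.
  rewrite -(ln_smooth n0 hn); apply: ln_le; [exact/lt_0_INR/ltP | exact: floorR_le].
- move=> i j _; rewrite !exponent_vectorE //.
  exact: logn_JP_ratio (prime_nth_prime i) (prime_nth_prime j) hJP.
Qed.
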